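(* For any skew-symmetric matrix $M$ with label set $\mathsf{N}$, the tensors $\sum_{I\subseteq\mathsf{N}}\operatorname{Pf}(M_I)\langle I|$ and $\sum_{I\subseteq\mathsf{N}}\operatorname{Pf}(M_{\bar I})|I\rangle$ are morphisms of $\mathscr{P}$. Consequently $\mathscr{P}$ is a dagger monoidal category (with the usual dagger of linear maps).
   Context: For $i\in\mathbb{N}$ let $V_i\cong\mathbb{C}^2$ with orthonormal basis $v_{i,0},v_{i,1}$, and for a finite ordered $\mathsf{N}\subset\mathbb{N}$ let $V_\mathsf{N}=\bigotimes_{i\in\mathsf{N}}V_i$. For $I\subseteq\mathsf{N}$, $|I\rangle=\bigotimes_{i\in\mathsf{N}}v_{i,\chi(i,I)}$ and $\langle I|=\bigotimes_{i\in\mathsf{N}}v^*_{i,\chi(i,I)}$, $\chi$ the indicator of $I$. For a skew-symmetric matrix $M$ with rows and columns labeled by $\mathsf{N}$ (same order), $M_I$ is the principal submatrix on labels $I$ and $M_{\bar I}$ the principal submatrix with labels $I$ deleted; $\operatorname{sPf}(M)=\sum_{I\subseteq\mathsf{N}}\operatorname{Pf}(M_I)|I\rangle$ and $\operatorname{sPf}^\vee(M)=\sum_{I\subseteq\mathsf{N}}\operatorname{Pf}(M_{\bar I})\langle I|$ (Pfaffian of the empty matrix $1$, of odd-size matrices $0$). $\mathscr{P}$ is the monoidal subcategory of $\mathrm{Vect}_\mathbb{C}$ with objects the $V_\mathsf{N}$ and morphisms generated under composition (tensor contraction) and tensor product by all $\operatorname{sPf}(M)$ and $\operatorname{sPf}^\vee(M)$.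 *)

From mathcomp Require Import all_boot all_algebra all_fingroup.
From mathcomp Require Import reals complex.
Set Implicit Arguments. Unset Strict Implicit. Unset Printing Implicit Defensive.
Import GRing.Theory Num.Theory.
Local Open Scope ring_scope.

(* A finite ordered label set N is represented by
   its size n: the k-th label of N (in the given order) is the position k : 'I_n.
   A subset I of N is a set of positions {set 'I_n}; the basis vector |I> of
   V_N = (C^2)^{(x) n} is indexed by I.  Objects of the category are the V_N,
   i.e. the numbers n; a linear map V_m -> V_n is given by its matrix
   coefficients  f I J = <J| f |I>. *)

Section Defs.
Variable C : numClosedFieldType.

Definition skewsym n (M : 'M[C]_n) : Prop := M^T = - M.

(* successor position (only used for even i < n with n even) *)
Definition nxt n (i : 'I_n) : 'I_n :=
  if insub i.+1 is Some j then j else i.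

Definition pfaffian n (A : 'M[C]_n) : C :=
  if odd n then 0 else
  (\sum_(s : 'S_n) (-1) ^+ s *
       \prod_(i : 'I_n | ~~ odd i) A (s i) (s (nxt i)))
    / ((2 ^ n./2 * (n./2)`!)%N)%:R.

Definition psub n (M : 'M[C]_n) (I : {set 'I_n}) : 'M[C]_#|I| :=
  \matrix_(i < #|I|, j < #|I|)
     M (@enum_val _ (mem I) i) (@enum_val _ (mem I) j).

Definition pmor (m n : nat) := {set 'I_m} -> {set 'I_n} -> C.

Definition idmor n : pmor n n := fun I J => (I == J)%:R.

Definition comp m n p (g : pmor n p) (f : pmor m n) : pmor m p :=
  fun I K => \sum_(J : {set 'I_n}) f I J * g J K.

Definition lpart m1 m2 (I : {set 'I_(m1 + m2)}) : {set 'I_m1} :=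
  [set i | lshift m2 i \in I].
Definition rpart m1 m2 (I : {set 'I_(m1 + m2)}) : {set 'I_m2} :=
  [set j | rshift m1 j \in I].

Definition tens m1 n1 m2 n2 (f : pmor m1 n1) (g : pmor m2 n2)
  : pmor (m1 + m2) (n1 + n2) :=
  fun I J => f (lpart I) (lpart J) * g (rpart I) (rpart J).

Definition sPf n (M : 'M[C]_n) : pmor 0 n :=
  fun _ I => pfaffian (psub M I).

Definition sPfv n (M : 'M[C]_n) : pmor n 0 :=
  fun I _ => pfaffian (psub M (~: I)).

Definition pf_effect n (M : 'M[C]_n) : pmor n 0 :=
  fun I _ => pfaffian (psub M I).
Definition pf_state n (M : 'M[C]_n) : pmor 0 n :=
  fun _ I => pfaffian (psub M (~: I)).

Definition pmor_dagger m n (f : pmor m n) : pmor n m :=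
  fun J I => (f I J)^*.

Inductive inP : forall m n, pmor m n -> Prop :=
  | inP_id n : inP (@idmor n)
  | inP_sPf n (M : 'M[C]_n) : skewsym M -> inP (@sPf n M)
  | inP_sPfv n (M : 'M[C]_n) : skewsym M -> inP (@sPfv n M)
  | inP_comp m n p (g : pmor n p) (f : pmor m n) :
      inP g -> inP f -> inP (@comp m n p g f)
  | inP_tens m1 n1 m2 n2 (f : pmor m1 n1) (g : pmor m2 n2) :
      inP f -> inP g -> inP (@tens m1 n1 m2 n2 f g).

End Defs.

From Pilot Require Import Defs.
From mathcomp Require Import all_boot all_algebra all_fingroup.
From mathcomp Require Import reals complex.
From mathcomp Require boolp.
Set Implicit Arguments. Unset Strict Implicit. Unset Printing Implicit Defensive.
Import GRing.Theory Num.Theory.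
Local Open Scope ring_scope.

(* The key morphism is the complement map X_n : |I> |-> |N \ I>, the n-fold
   Pauli X.  X_2 is a contraction of Pfaffian tensors of 2x2 and 3x3 matrices
   (an identity between 16 coefficients, checked by evaluation), so X_n lies in
   P for every even n.  As sPf(0) = |{}> and sPf^v(0) = <N|,
     sum_I Pf(M_I) <I|     = (sPf^v(0) (x) sPf^v(M)) o X_2n o (sPf(0) (x) id),
     sum_I Pf(M_(N\I)) |I> = (sPf^v(0) (x) id) o X_2n o (sPf(0) (x) sPf(M)).
   The adjoint of sPf(M) is sum_I Pf(conj(M)_I) <I|, that of sPf^v(M) is
   sum_I Pf(conj(M)_(N\I)) |I>, and taking adjoints reverses composition and
   commutes with tensor products; so P is closed under adjoints by induction on
   the generation of its morphisms. *)

Section SetParts.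
Variables a b : nat.

Definition join (A : {set 'I_a}) (B : {set 'I_b}) : {set 'I_(a + b)} :=
  [set i | match split i with inl j => j \in A | inr k => k \in B end].

Lemma lpart_join A B : lpart (join A B) = A.
Proof. by apply/setP => i; rewrite !inE (unsplitK (inl _ i)). Qed.

Lemma rpart_join A B : rpart (join A B) = B.
Proof. by apply/setP => i; rewrite !inE (unsplitK (inr _ i)). Qed.

Lemma join_parts (I : {set 'I_(a + b)}) : join (lpart I) (rpart I) = I.
Proof.
apply/setP => i; rewrite !inE; case: splitP => j ij; rewrite inE;
  by congr (_ \in I); apply: val_inj.
Qed.

Lemma eq_parts (I J : {set 'I_(a + b)}) :
  (I == J) = (lpart I == lpart J) && (rpart I == rpart J).
Proof.
apply/eqP/andP => [-> //|[/eqP eqL /eqP eqR]].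
by rewrite -(join_parts I) -(join_parts J) eqL eqR.
Qed.

Lemma lpartC (I : {set 'I_(a + b)}) : lpart (~: I) = ~: lpart I.
Proof. by apply/setP => i; rewrite !inE. Qed.

Lemma rpartC (I : {set 'I_(a + b)}) : rpart (~: I) = ~: rpart I.
Proof. by apply/setP => i; rewrite !inE. Qed.

End SetParts.

Lemma rpart0 n (I : {set 'I_(0 + n)}) : rpart I = I.
Proof. by apply/setP => i; rewrite !inE; congr (_ \in I); apply: val_inj. Qed.

Lemma set_ord0_eq (A B : {set 'I_0}) : A = B.
Proof. by apply/setP => -[]. Qed.

Section BitSequences.
Local Open Scope nat_scope.
Variable n : nat.
Implicit Types I J : {set 'I_n}.

Definition bits I : seq bool := [seq i \in I | i <- enum 'I_n].

Lemma size_bits I : size (bits I) = n.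
Proof. by rewrite size_map size_enum_ord. Qed.

Lemma nth_bits I k (lt_kn : k < n) : nth false (bits I) k = (Ordinal lt_kn \in I).
Proof.
rewrite (nth_map (Ordinal lt_kn)) ?size_enum_ord //.
by congr (_ \in I); apply: val_inj; rewrite /= nth_enum_ord.
Qed.

Lemma bits_eqP I (s : seq bool) :
  size s = n -> (forall k (lt_kn : k < n), (Ordinal lt_kn \in I) = nth false s k) ->
  bits I = s.
Proof.
move=> size_s eq_s; apply: (@eq_from_nth _ false); rewrite ?size_bits // => k lt_kn.
by rewrite nth_bits eq_s.
Qed.

Lemma bits_inj : injective bits.
Proof. by move=> I J eqIJ; apply/setP => -[k lt_kn]; rewrite -!nth_bits eqIJ. Qed.

Lemma bits_setC I : bits (~: I) = map negb (bits I).
Proof.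
apply: bits_eqP => [|k lt_kn]; first by rewrite size_map size_bits.
by rewrite (nth_map false) ?size_bits // nth_bits inE.
Qed.

Lemma card_bits I : #|I| = count id (bits I).
Proof. by rewrite count_map -sum1_count -sum1_card big_enum_cond. Qed.

Fixpoint allbits k : seq (seq bool) :=
  if k is k'.+1 then map (cons false) (allbits k') ++ map (cons true) (allbits k')
  else [:: [::]].

Lemma mem_allbits k s : (s \in allbits k) = (size s == k).
Proof.
have mem_map_cons (x y : bool) s' l : (x :: s' \in map (cons y) l) = (x == y) && (s' \in l).
  by apply/mapP/andP => [[t t_l [-> ->]] | [/eqP-> s'_l]]; last exists s'.
elim: k s => [|k IHk] [|x s] //=; rewrite mem_cat ?eqSS ?mem_map_cons -?IHk.
  by apply/negbTE/orP => -[] /mapP[].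
by case: x; rewrite ?orbF.
Qed.

Lemma uniq_allbits k : uniq (allbits k).
Proof.
have cons_inj (x : bool) : injective (cons x) by move=> s t [].
elim: k => //= k IHk; rewrite cat_uniq !map_inj_uniq // IHk /= andbT.
by apply/hasPn => _ /mapP[s _ ->]; apply/mapP => -[t _ []].
Qed.

Lemma sum_sets_bits (R : nmodType) (F : seq bool -> R) :
  (\sum_(J : {set 'I_n}) F (bits J) = \sum_(s <- allbits n) F s)%R.
Proof.
rewrite -big_enum -(big_map bits xpredT); apply/perm_big/uniq_perm.
- by rewrite map_inj_uniq ?enum_uniq //; apply: bits_inj.
- exact: uniq_allbits.
move=> s; rewrite mem_allbits; apply/mapP/eqP => [[J _ ->]|size_s].
  exact: size_bits.
exists [set i : 'I_n | nth false s i]; first by rewrite mem_enum.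
by apply/esym/bits_eqP => // k lt_kn; rewrite inE.
Qed.

End BitSequences.

Lemma bits_lpart m1 m2 (I : {set 'I_(m1 + m2)}) : bits (lpart I) = take m1 (bits I).
Proof.
apply: bits_eqP => [|k lt_km1]; first by rewrite size_takel // size_bits leq_addr.
rewrite nth_take // (nth_bits _ (ltn_addr m2 lt_km1)) inE.
by congr (_ \in I); apply: val_inj.
Qed.

Lemma bits_rpart m1 m2 (I : {set 'I_(m1 + m2)}) : bits (rpart I) = drop m1 (bits I).
Proof.
apply: bits_eqP => [|k lt_km2]; first by rewrite size_drop size_bits addKn.
have lt_m1k : (m1 + k < m1 + m2)%N by rewrite ltn_add2l.
by rewrite nth_drop (nth_bits _ lt_m1k) inE; congr (_ \in I); apply: val_inj.
Qed.

Section Pfaffian.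
Variable C : numClosedFieldType.

Lemma pfaffian_odd n (A : 'M[C]_n) : odd n -> pfaffian A = 0.
Proof. by rewrite /pfaffian => ->. Qed.

Lemma pfaffian_size0 (A : 'M[C]_0) : pfaffian A = 1.
Proof.
rewrite /pfaffian /= divr1 (big_pred1 1%g) => [|s]; last first.
  by apply/esym/eqP/permP => -[].
by rewrite odd_perm1 mul1r big_pred0 // => -[].
Qed.

Lemma perm2P (s : 'S_2) : s = 1%g \/ s = tperm 0 1.
Proof.
have ord2P (i : 'I_2) : i = 0 \/ i = 1 by case: i => -[|[|//]] ?; [left|right]; apply: val_inj.
have s10 : s 1 != s 0 by rewrite (inj_eq perm_inj).
case: (ord2P (s 0)) => s0; [left | right]; apply/permP => i;
  case: (ord2P i) => ->; rewrite ?perm1 ?tpermL ?tpermR // s0 in s10 *;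
  by case: (ord2P (s 1)) s10 => ->.
Qed.

Lemma pfaffian2 (A : 'M[C]_2) : A^T = - A -> pfaffian A = A 0 1.
Proof.
move=> skewA.
have term (s : 'S_2) : (-1) ^+ s * \prod_(i < 2 | ~~ odd i) A (s i) (s (nxt i)) = A 0 1.
  have nxt0 : nxt (0 : 'I_2) = 1
    by rewrite /nxt; case: insubP => [j _ j1|//]; apply: val_inj.
  rewrite big_mkcond !big_ord_recl big_ord0 /= mulr1 nxt0.
  case: (perm2P s) => ->; rewrite ?odd_perm1 ?odd_tperm ?perm1 ?tpermL ?tpermR /=.
    by rewrite mul1r mulr1.
  have := congr1 (fun M : 'M_2 => M 0 1) skewA; rewrite !mxE => ->.
  by rewrite mulr1 mulN1r opprK.
rewrite /pfaffian /= (eq_bigr _ (fun s _ => term s)) sumr_const card_Sn.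
have -> : (2 ^ 1 * 1`!)%N = 2`! by [].
by rewrite -[A 0 1 *+ _]mulr_natr mulfK // pnatr_eq0.
Qed.

Lemma pfaffian0 n : pfaffian (0 : 'M[C]_n) = (n == 0)%:R.
Proof.
case: n => [|n]; first exact: pfaffian_size0.
rewrite /pfaffian; case: ifP => // _; rewrite big1 ?mul0r // => s _.
by rewrite (bigD1 ord0) //= mxE mul0r mulr0.
Qed.

Lemma psub0 n (J : {set 'I_n}) : psub (0 : 'M[C]_n) J = 0.
Proof. by apply/matrixP => i j; rewrite !mxE. Qed.

Lemma pfaffian_psub0 n (J : {set 'I_n}) : pfaffian (psub (0 : 'M[C]_n) J) = (J == set0)%:R.
Proof. by rewrite psub0 pfaffian0 cards_eq0. Qed.

Lemma psub_map_mx (C' : numClosedFieldType) (f : C -> C') n (M : 'M[C]_n) J :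
  psub (map_mx f M) J = map_mx f (psub M J).
Proof. by apply/matrixP => i j; rewrite !mxE. Qed.

Lemma pfaffian_map (C' : numClosedFieldType) (f : {rmorphism C -> C'}) n (A : 'M[C]_n) :
  pfaffian (map_mx f A) = f (pfaffian A).
Proof.
rewrite /pfaffian; case: (odd n); first by rewrite rmorph0.
rewrite fmorph_div rmorph_nat rmorph_sum; congr (_ / _); apply: eq_bigr => s _.
rewrite rmorphM rmorph_prod rmorphXn rmorphN1; congr (_ * _).
by apply: eq_bigr => i _; rewrite mxE.
Qed.

Lemma skewsym_map (C' : numClosedFieldType) (f : {additive C -> C'}) n (M : 'M[C]_n) :
  skewsym M -> skewsym (map_mx f M).
Proof. by rewrite /skewsym => skewM; rewrite map_trmx skewM map_mxN. Qed.

Lemma skewsym0 n : skewsym (0 : 'M[C]_n).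
Proof. by rewrite /skewsym trmx0 oppr0. Qed.

Definition sgnmx n (s : int) : 'M[C]_n :=
  \matrix_(i, j) if (i < j)%N then s%:~R else if (j < i)%N then - s%:~R else 0.

Lemma skewsym_sgnmx n s : skewsym (sgnmx n s).
Proof.
apply/matrixP => i j; rewrite !mxE.
by case: (ltngtP i j) => //=; rewrite ?opprK ?oppr0.
Qed.

Lemma enum_val_ltn n (J : {set 'I_n}) (i j : 'I_#|J|) :
  (i < j)%N -> (enum_val i < enum_val j)%N.
Proof.
have sorted_J : sorted ltn (map val (enum J)).
  rewrite -[enum _](eq_filter (mem_enum _)) -(eq_filter (mem_map val_inj _)) -filter_map.
  by rewrite (sorted_filter ltn_trans) // unlock val_ord_enum iota_ltn_sorted.
move=> lt_ij; have x0 := enum_val i.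
rewrite !(enum_val_nth x0) -!(nth_map x0 (val x0)) -?cardE //.
by apply: (sorted_ltn_nth ltn_trans) => //; rewrite inE size_map -cardE.
Qed.

Lemma psub_sgnmx n s (J : {set 'I_n}) : psub (sgnmx n s) J = sgnmx #|J| s.
Proof.
apply/matrixP => i j; rewrite !mxE; case: (ltngtP i j) => [lt_ij|lt_ji|eq_ij].
- by rewrite enum_val_ltn.
- by rewrite ltnNge (ltnW (enum_val_ltn lt_ji)) enum_val_ltn.
- by rewrite (val_inj eq_ij) ltnn.
Qed.

Definition pf_sgnmx k (s : int) : int :=
  match k with 0 => 1 | 2 => s | _ => 0 end.

Lemma pfaffian_sgnmx k s : (k <= 3)%N -> pfaffian (sgnmx k s) = (pf_sgnmx k s)%:~R.
Proof.
case: k => [|[|[|[|//]]]] _.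
- exact: pfaffian_size0.
- exact: pfaffian_odd.
- by rewrite pfaffian2 ?skewsym_sgnmx // mxE.
- exact: pfaffian_odd.
Qed.

Lemma pfaffian_psub_sgnmx n s (J : {set 'I_n}) :
  (n <= 3)%N -> pfaffian (psub (sgnmx n s) J) = (pf_sgnmx #|J| s)%:~R.
Proof.
by move=> le_n3; rewrite psub_sgnmx pfaffian_sgnmx // (leq_trans (max_card _)) ?card_ord.
Qed.

End Pfaffian.

Definition complmor (C : numClosedFieldType) n : pmor C n n := fun I J => (J == ~: I)%:R.
Arguments complmor : clear implicits.

Section Morphisms.
Variable C : numClosedFieldType.

Lemma pmorP m n (f g : pmor C m n) : (forall I J, f I J = g I J) -> f = g.
Proof. by move=> eq_fg; apply: boolp.funext => I; apply: boolp.funext. Qed.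

Lemma comp_delta_r m n p (g : pmor C n p) (f : pmor C m n) (h : {set 'I_m} -> {set 'I_n}) :
  (forall I J, f I J = (J == h I)%:R) -> forall I K, Defs.comp g f I K = g (h I) K.
Proof.
move=> fE I K; rewrite /Defs.comp (bigD1 (h I)) //= fE eqxx mul1r big1 ?addr0 //.
by move=> J /negbTE neJ; rewrite fE neJ mul0r.
Qed.

Lemma comp_delta_l m n p (g : pmor C n p) (f : pmor C m n) (h : {set 'I_p} -> {set 'I_n}) :
  (forall J K, g J K = (J == h K)%:R) -> forall I K, Defs.comp g f I K = f I (h K).
Proof.
move=> gE I K; rewrite /Defs.comp (bigD1 (h K)) //= gE eqxx mulr1 big1 ?addr0 //.
by move=> J /negbTE neJ; rewrite gE neJ mulr0.
Qed.

Lemma complmorE n (J K : {set 'I_n}) : complmor C n J K = (J == ~: K)%:R.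
Proof. by rewrite /complmor -(inj_eq (@setC_inj _)) setCK eq_sym. Qed.

Lemma complmor0 : complmor C 0 = @idmor C 0.
Proof.
by apply: pmorP => I J; rewrite /complmor /idmor (set_ord0_eq J I) (set_ord0_eq (~: I) I).
Qed.

Lemma tens_complmor a b : tens (complmor C a) (complmor C b) = complmor C (a + b).
Proof.
by apply: pmorP => I J; rewrite /tens /complmor -natrM mulnb (eq_parts J) lpartC rpartC.
Qed.

Lemma tens_sPf0_idmor a b (I : {set 'I_b}) L :
  tens (sPf (0 : 'M[C]_a)) (@idmor C b) I L = (L == join set0 I)%:R.
Proof.
rewrite /tens /sPf pfaffian_psub0 rpart0 /idmor (eq_parts L) lpart_join rpart_join.
by rewrite -natrM mulnb [I == _]eq_sym.
Qed.

Lemma tens_sPfv0_idmor a b L (J : {set 'I_b}) :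
  tens (sPfv (0 : 'M[C]_a)) (@idmor C b) L J = (L == join setT J)%:R.
Proof.
rewrite /tens /sPfv pfaffian_psub0 rpart0 /idmor (eq_parts L) lpart_join rpart_join.
by rewrite -setCT (inj_eq (@setC_inj _)) -natrM mulnb.
Qed.

Lemma dagger_id n : pmor_dagger (@idmor C n) = @idmor C n.
Proof. by apply: pmorP => I J; rewrite /pmor_dagger /idmor rmorph_nat eq_sym. Qed.

Lemma dagger_comp m n p (g : pmor C n p) (f : pmor C m n) :
  pmor_dagger (Defs.comp g f) = Defs.comp (pmor_dagger f) (pmor_dagger g).
Proof.
apply: pmorP => K I; rewrite /pmor_dagger /Defs.comp rmorph_sum.
by apply: eq_bigr => J _; rewrite rmorphM mulrC.
Qed.

Lemma dagger_tens m1 n1 m2 n2 (f : pmor C m1 n1) (g : pmor C m2 n2) :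
  pmor_dagger (tens f g) = tens (pmor_dagger f) (pmor_dagger g).
Proof. by apply: pmorP => J I; rewrite /pmor_dagger /tens rmorphM. Qed.

End Morphisms.

Inductive net : nat -> nat -> Type :=
  | Nid n : net n n
  | NsPf3 of int : net 0 3
  | NsPfv2 of int : net 2 0
  | Ncomp m n p of net n p & net m n : net m p
  | Ntens m1 n1 m2 n2 of net m1 n1 & net m2 n2 : net (m1 + m2) (n1 + n2).

(* Coefficient tables indexed by bit sequences rather than finite sets, with
   sums written as [foldr] (big operators are locked), so that [vm_compute]
   can evaluate networks of Pfaffian tensors. *)
Definition table := seq bool -> seq bool -> int.

Definition table_id : table := fun x y => (x == y)%:Z.

Definition table_comp n (tg tf : table) : table :=
  fun x z => foldr (fun y acc => tf x y * tg y z + acc) 0 (allbits n).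

Definition table_tens m1 n1 (tf tg : table) : table :=
  fun x y => tf (take m1 x) (take n1 y) * tg (drop m1 x) (drop n1 y).

Fixpoint net_table m n (e : net m n) : table :=
  match e with
  | Nid _ => table_id
  | NsPf3 s => fun _ y => pf_sgnmx (count id y) s
  | NsPfv2 s => fun x _ => pf_sgnmx (count id (map negb x)) s
  | Ncomp _ k _ g f => table_comp k (net_table g) (net_table f)
  | Ntens m1 n1 _ _ f g => table_tens m1 n1 (net_table f) (net_table g)
  end.

Section Networks.
Variable C : numClosedFieldType.

Fixpoint net_pmor m n (e : net m n) : pmor C m n :=
  match e with
  | Nid k => @idmor C k
  | NsPf3 s => sPf (sgnmx C 3 s)
  | NsPfv2 s => sPfv (sgnmx C 2 s)
  | Ncomp _ _ _ g f => Defs.comp (net_pmor g) (net_pmor f)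
  | Ntens _ _ _ _ f g => tens (net_pmor f) (net_pmor g)
  end.

Lemma inP_net m n (e : net m n) : inP (net_pmor e).
Proof.
elim: e => /= [k|s|s|{}m k p g IHg f IHf|m1 n1 m2 n2 f IHf g IHg].
- exact: inP_id.
- exact/inP_sPf/skewsym_sgnmx.
- exact/inP_sPfv/skewsym_sgnmx.
- exact: inP_comp.
- exact: inP_tens.
Qed.

Definition has_table m n (f : pmor C m n) (t : table) :=
  forall I J, f I J = (t (bits I) (bits J))%:~R.

Lemma has_table_id n : has_table (@idmor C n) table_id.
Proof. by move=> I J; rewrite /idmor /table_id (inj_eq (@bits_inj n)). Qed.

Lemma has_table_comp m n p (g : pmor C n p) (f : pmor C m n) tg tf :
  has_table g tg -> has_table f tf -> has_table (Defs.comp g f) (table_comp n tg tf).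
Proof.
move=> g_tg f_tf I K; rewrite /Defs.comp.
under eq_bigr do rewrite f_tf g_tg -intrM.
rewrite (sum_sets_bits n (fun y => (tf (bits I) y * tg y (bits K))%:~R)) -rmorph_sum.
rewrite /table_comp; congr (_ %:~R).
by elim: (allbits n) => [|y s /= <-]; rewrite ?big_nil ?big_cons.
Qed.

Lemma has_table_tens m1 n1 m2 n2 (f : pmor C m1 n1) (g : pmor C m2 n2) tf tg :
  has_table f tf -> has_table g tg -> has_table (tens f g) (table_tens m1 n1 tf tg).
Proof.
move=> f_tf g_tg I J.
by rewrite /tens f_tf g_tg /table_tens intrM !bits_lpart !bits_rpart.
Qed.

Lemma net_has_table m n (e : net m n) : has_table (net_pmor e) (net_table e).
Proof.
elim: e => /= [k|s|s|{}m k p g IHg f IHf|m1 n1 m2 n2 f IHf g IHg].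
- exact: has_table_id.
- by move=> I J; rewrite /sPf pfaffian_psub_sgnmx ?card_bits.
- by move=> I J; rewrite /sPfv pfaffian_psub_sgnmx ?card_bits ?bits_setC.
- exact: has_table_comp.
- exact: has_table_tens.
Qed.

Lemma has_table_complmor n : has_table (complmor C n) (fun x y => (y == map negb x)%:Z).
Proof. by move=> I J; rewrite /complmor -bits_setC (inj_eq (@bits_inj n)). Qed.

End Networks.

(* Two copies of |000> - |011> - |101> - |110> (the sPf of the 3x3 matrix with
   -1 above the diagonal) contracted with the effects <00| + <11| and <11|. *)
Definition flip2_net : net 2 2 :=
  let S3 := NsPf3 (-1) in
  let T : net 1 2 := Ncomp (Ntens (NsPfv2 1) (Nid 2)) (Ntens (Nid 1) S3) in
  let E : net 2 1 :=
    Ncomp (Ntens (NsPfv2 0) (Nid 1))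
      (Ncomp (Ntens (Nid 1) (Ntens (NsPfv2 1) (Nid 2))) (Ntens (Nid 2) S3)) in
  Ncomp (Ntens (Nid 1) E) (Ntens T (Nid 1)).

Lemma flip2_net_table :
  all (fun x => all (fun y => net_table flip2_net x y == (y == map negb x)%:Z) (allbits 2))
      (allbits 2).
Proof. by vm_compute. Qed.

Section PfaffianTensors.
Variable C : numClosedFieldType.

Lemma complmor2E : complmor C 2 = net_pmor C flip2_net.
Proof.
apply: pmorP => I J; rewrite (@has_table_complmor C 2 I J).
rewrite (@net_has_table C _ _ flip2_net I J).
congr (_ %:~R); apply/esym/eqP.
have /allP/(_ (bits I)) := flip2_net_table; rewrite mem_allbits size_bits => /(_ isT)/allP.
by apply; rewrite mem_allbits size_bits.
Qed.

Lemma inP_complmor_double n : inP (complmor C (n + n)).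
Proof.
elim: n => [|n IHn]; first by rewrite complmor0; apply: inP_id.
rewrite addSn addnS -[(n + n).+2]/(2 + (n + n))%N -tens_complmor complmor2E.
exact: inP_tens (inP_net _ _) IHn.
Qed.

Lemma pf_effect_factor n (M : 'M[C]_n) :
  pf_effect M = Defs.comp (tens (sPfv (0 : 'M[C]_n)) (sPfv M))
                  (Defs.comp (complmor C (n + n)) (tens (sPf (0 : 'M[C]_n)) (@idmor C n))).
Proof.
apply: pmorP => I K.
have flipped J L : Defs.comp (complmor C (n + n)) (tens (sPf (0 : 'M[C]_n)) (@idmor C n)) J L
                   = (L == ~: join set0 J)%:R.
  by rewrite (comp_delta_r _ (@tens_sPf0_idmor C n n)).
rewrite (comp_delta_r _ flipped) /tens /sPfv lpartC rpartC lpart_join rpart_join !setCK.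
by rewrite pfaffian_psub0 eqxx mul1r.
Qed.

Lemma pf_state_factor n (M : 'M[C]_n) :
  pf_state M = Defs.comp (tens (sPfv (0 : 'M[C]_n)) (@idmor C n))
                 (Defs.comp (complmor C (n + n)) (tens (sPf (0 : 'M[C]_n)) (sPf M))).
Proof.
apply: pmorP => I J.
rewrite (comp_delta_l _ (@tens_sPfv0_idmor C n n)) (comp_delta_l _ (@complmorE C _)).
by rewrite /tens /sPf lpartC rpartC lpart_join rpart_join setCT pfaffian_psub0 eqxx mul1r.
Qed.

Lemma inP_pf_effect n (M : 'M[C]_n) : skewsym M -> inP (pf_effect M).
Proof.
move=> skewM; have skew0 := skewsym0 C n; rewrite pf_effect_factor.
exact: inP_comp (inP_tens (inP_sPfv skew0) (inP_sPfv skewM))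
  (inP_comp (inP_complmor_double n) (inP_tens (inP_sPf skew0) (inP_id C n))).
Qed.

Lemma inP_pf_state n (M : 'M[C]_n) : skewsym M -> inP (pf_state M).
Proof.
move=> skewM; have skew0 := skewsym0 C n; rewrite pf_state_factor.
exact: inP_comp (inP_tens (inP_sPfv skew0) (inP_id C n))
  (inP_comp (inP_complmor_double n) (inP_tens (inP_sPf skew0) (inP_sPf skewM))).
Qed.

Lemma dagger_sPf n (M : 'M[C]_n) : pmor_dagger (sPf M) = pf_effect (map_mx Num.conj M).
Proof.
by apply: pmorP => I J; rewrite /pmor_dagger /sPf /pf_effect psub_map_mx pfaffian_map.
Qed.

Lemma dagger_sPfv n (M : 'M[C]_n) : pmor_dagger (sPfv M) = pf_state (map_mx Num.conj M).
Proof.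
by apply: pmorP => I J; rewrite /pmor_dagger /sPfv /pf_state psub_map_mx pfaffian_map.
Qed.

Lemma inP_dagger m n (f : pmor C m n) : inP f -> inP (pmor_dagger f).
Proof.
elim=> {m n f} [n|n M skewM|n M skewM|m n p g f _ IHg _ IHf|m1 n1 m2 n2 f g _ IHf _ IHg].
- by rewrite dagger_id; apply: inP_id.
- by rewrite dagger_sPf; apply/inP_pf_effect/skewsym_map.
- by rewrite dagger_sPfv; apply/inP_pf_state/skewsym_map.
- by rewrite dagger_comp; apply: inP_comp.
- by rewrite dagger_tens; apply: inP_tens.
Qed.

End PfaffianTensors.

Theorem mainTheorem11 (R : realType) :
  (forall n (M : 'M[complex R]_n), skewsym M -> inP (pf_effect M)) /\
  (forall n (M : 'M[complex R]_n), skewsym M -> inP (pf_state M)) /\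
  (forall m n (f : pmor (complex R) m n), inP f -> inP (pmor_dagger f)).
Proof.
by split; [|split]; [apply: inP_pf_effect | apply: inP_pf_state | apply: inP_dagger].
Qed.
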